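(* Let $F$ be a field, $U,V$ finite-dimensional $F$-vector spaces with $\dim U=n$ and $\dim V=m$, $A:U\times U\to V$ an alternating bilinear map whose image spans $V$, $u_1<\dots<u_n$ an ordered basis of $U$, and $\mathcal{B}$, $W(\mathcal{B})$ as in the context. Let $r,t$ be non-negative integers with $\binom{n}{2}-m=\binom{r}{2}+t$ and $0\le t<r$. Then $W(\mathcal{B})$ contains at least $\binom{n}{3}-\binom{r}{3}-\binom{t}{2}$ linearly independent elements. In particular $\dim\operatorname{Im}\Psi\ge\binom{n}{3}-\binom{r}{3}-\binom{t}{2}$.
   Context: $\mathcal{Y}$ is the set of $2$-element subsets of $\{1,\dots,n\}$, totally ordered by $\{i,j\}<\{r,s\}$ iff $\max\{i,j\}<\max\{r,s\}$, or the maxima are equal to $a$ and the remaining element of $\{i,j\}\setminus\{a\}$ is smaller than that of $\{r,s\}\setminus\{a\}$. $\mathcal{B}$ is constructed as follows: $\mathcal{B}_0=B_0=\emptyset$; inductively let $\{i,j\}$ ($i<j$) be the least element of $\mathcal{Y}$ with $A(u_i,u_j)\notin\operatorname{span}(B_k)$, and set $\mathcal{B}_{k+1}=\mathcal{B}_k\cup\{\{i,j\}\}$, $B_{k+1}=B_k\cup\{A(u_i,u_j)\}$; stop at $k=m$ and put $\mathcal{B}=\mathcal{B}_m$. $\Psi:U\otimes_F U\otimes_F U\to V\otimes_F U$ is the linear map with $\Psi(x\otimes y\otimes z)=A(x,y)\otimes z+A(y,z)\otimes x+A(z,x)\otimes y$. $W(\mathcal{B})$ is the set of elements $\Psi(u_i\otimes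 u_j\otimes u_k)$ with $i<j<k$ such that $\{i,j,k\}$ contains a $2$-element subset belonging to $\mathcal{B}$. Binomial coefficients satisfy $\binom{a}{b}=0$ when $0\le a<b$. *)

From HB Require Import structures.
From mathcomp Require Import all_boot all_order all_algebra.
Set Implicit Arguments. Unset Strict Implicit. Unset Printing Implicit Defensive.
Import GRing.Theory.
Local Open Scope ring_scope.

Section Defs.
Variables (F : fieldType) (U V : vectType F).

(* Model of V (x)_F U : the canonical isomorphic space Hom(U^*, V),
   with v (x) z  |->  (phi |-> phi z *: v). *)
Definition tensVU := 'Hom('Hom(U, F^o), V).

Definition tens (v : V) (z : U) : tensVU :=
  linfun (fun phi : 'Hom(U, F^o) => (phi z : F) *: v).

Definition Psi3 (A : U -> U -> V) (x y z : U) : tensVU :=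
  tens (A x y) z + tens (A y z) x + tens (A z x) y.

Definition pairsY (n : nat) : seq ('I_n * 'I_n) :=
  flatten [seq [seq (i, j) | i <- [seq i : 'I_n <- enum 'I_n | (i < j)%N]] | j : 'I_n <- enum 'I_n].

Definition greedyB (A : U -> U -> V) (n : nat) (u : n.-tuple U)
  : seq ('I_n * 'I_n) :=
  foldl (fun Bk (p : 'I_n * 'I_n) =>
           if A (tnth u p.1) (tnth u p.2)
                \notin <<[seq A (tnth u q.1) (tnth u q.2) | q <- Bk]>>%VS
           then rcons Bk p else Bk) [::] (pairsY n).

Definition inWB (A : U -> U -> V) (n : nat) (u : n.-tuple U) (w : tensVU) : Prop :=
  exists i j k : 'I_n, [/\ (i < j)%N, (j < k)%N,
    ((i, j) \in greedyB A u) || ((i, k) \in greedyB A u) || ((j, k) \in greedyB A u)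
    & w = Psi3 A (tnth u i) (tnth u j) (tnth u k)].

End Defs.

From HB Require Import structures.
From mathcomp Require Import all_boot all_algebra.
From mathcomp Require Import zify.
Set Implicit Arguments. Unset Strict Implicit. Unset Printing Implicit Defensive.
Import GRing.Theory.

(* Order the triples i < j < k colexicographically (on pairs, colex order is
   the order of Y). If {i,j,k} = p ∪ {l} with p ∈ B, contracting
   Psi(u_i ⊗ u_j ⊗ u_k) with the l-th coordinate form of U gives ±A(p), whereas
   the same contraction of any colex-smaller triple lies in the span of the
   A(q), q < p in Y, which does not contain A(p) by the greedy choice of B.
   So these Psi-images are linearly independent. The triples containing no pair
   of B are the triangles of a graph with C(n,2) - m = C(r,2) + t edges, and
   such a graph has at most C(r,3) + C(t,2) triangles (a case of
   Kruskal-Katona), by induction on the number of vertices. *)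

Definition colex_pairs (n : nat) : seq (nat * nat) :=
  flatten [seq [seq (i, j) | i <- iota 0 j] | j <- iota 0 n].

Definition colex_triples (n : nat) : seq (nat * nat * nat) :=
  flatten [seq [seq (q.1, q.2, k) | q <- colex_pairs k] | k <- iota 0 n].

(* Binary weights rank pairs and triples colexicographically; the weight of a
   triple is the weight of any two of its entries plus 2 ^ (third entry). *)
Definition wt2 (q : nat * nat) := 2 ^ q.1 + 2 ^ q.2.
Definition wt3 (x : nat * nat * nat) := 2 ^ x.1.1 + 2 ^ x.1.2 + 2 ^ x.2.

Lemma wt2_ltn_trans : transitive (fun p q => wt2 p < wt2 q).
Proof. by move=> ? ? ?; apply: ltn_trans. Qed.

Lemma wt3_ltn_trans : transitive (fun x y => wt3 x < wt3 y).
Proof. by move=> ? ? ?; apply: ltn_trans. Qed.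

Lemma colex_pairsS n :
  colex_pairs n.+1 = colex_pairs n ++ [seq (i, n) | i <- iota 0 n].
Proof. by rewrite /colex_pairs -addn1 iotaD map_cat flatten_cat /= cats0. Qed.

Lemma colex_triplesS n :
  colex_triples n.+1 = colex_triples n ++ [seq (q.1, q.2, n) | q <- colex_pairs n].
Proof. by rewrite /colex_triples -addn1 iotaD map_cat flatten_cat /= cats0. Qed.

Lemma mem_colex_pairs n a b : ((a, b) \in colex_pairs n) = (a < b < n).
Proof.
elim: n => [|n IHn]; first by rewrite ltn0 andbF.
rewrite colex_pairsS mem_cat IHn.
have -> : ((a, b) \in [seq (i, n) | i <- iota 0 n]) = (a < n) && (b == n).
  apply/mapP/andP => [[i]|[an /eqP ->]]; last by exists a; rewrite ?mem_iota.
  by rewrite mem_iota => /andP[_ lt_in] [-> ->].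
lia.
Qed.

Lemma mem_colex_triples n a b c :
  ((a, b, c) \in colex_triples n) = [&& a < b, b < c & c < n].
Proof.
elim: n => [|n IHn]; first by rewrite ltn0 !andbF.
rewrite colex_triplesS mem_cat IHn.
have -> : ((a, b, c) \in [seq (q.1, q.2, n) | q <- colex_pairs n]) =
          [&& a < b, b < n & c == n].
  apply/mapP/idP => [[[i j]]|/and3P[ab bn /eqP ->]].
    by rewrite mem_colex_pairs => /andP[ij jn] [-> -> ->]; rewrite ij jn eqxx.
  by exists (a, b); rewrite ?mem_colex_pairs ?ab.
lia.
Qed.

Lemma size_colex_pairs n : size (colex_pairs n) = 'C(n, 2).
Proof.
by elim: n => // n IHn; rewrite colex_pairsS size_cat IHn size_map size_iota binS bin1.
Qed.

Lemma size_colex_triples n : size (colex_triples n) = 'C(n, 3).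
Proof.
by elim: n => // n IHn; rewrite colex_triplesS size_cat IHn size_map size_colex_pairs.
Qed.

Lemma wt2_lt_exp a b n : a < b -> b < n -> wt2 (a, b) < 2 ^ n.
Proof.
move=> ab bn; rewrite /wt2 /=.
have := ltn_exp2l a b (isT : 1 < 2); have := leq_exp2l b.+1 n (isT : 1 < 2).
rewrite expnS ab bn; lia.
Qed.

Lemma wt3_lt_exp a b c n : a < b -> b < c -> c < n -> wt3 (a, b, c) < 2 ^ n.
Proof.
move=> ab bc cn; have := wt2_lt_exp ab bc; have := leq_exp2l c.+1 n (isT : 1 < 2).
rewrite /wt2 /wt3 expnS cn /=; lia.
Qed.

Lemma sorted_colex_pairs n : sorted (fun p q => wt2 p < wt2 q) (colex_pairs n).
Proof.
rewrite sorted_pairwise; last exact: wt2_ltn_trans.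
elim: n => // n IHn.
rewrite colex_pairsS pairwise_cat IHn /=; apply/andP; split.
  apply/allrelP => [[a b] [i j]]; rewrite mem_colex_pairs => /andP[ab bn].
  by case/mapP=> k _ [-> ->]; have := wt2_lt_exp ab bn; rewrite /wt2 /=; lia.
rewrite pairwise_map -sorted_pairwise; last by move=> ? ? ?; apply: ltn_trans.
apply: sub_sorted (iota_ltn_sorted 0 n) => i j ij.
by rewrite /wt2 /= ltn_add2r ltn_exp2l.
Qed.

Lemma sorted_colex_triples n : sorted (fun x y => wt3 x < wt3 y) (colex_triples n).
Proof.
rewrite sorted_pairwise; last exact: wt3_ltn_trans.
elim: n => // n IHn.
rewrite colex_triplesS pairwise_cat IHn /=; apply/andP; split.
  apply/allrelP => [[[a b] c] [[i j] k]]; rewrite mem_colex_triples.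
  case/and3P=> ab bc cn /mapP[q _ [_ _ ->]].
  by have := wt3_lt_exp ab bc cn; rewrite /wt3 /=; lia.
rewrite pairwise_map -sorted_pairwise; last by move=> ? ? ?; apply: ltn_trans.
apply: sub_sorted (sorted_colex_pairs n) => p q.
by rewrite /wt2 /wt3 /= ltn_add2r.
Qed.

Lemma uniq_colex_pairs n : uniq (colex_pairs n).
Proof.
by apply: (sorted_uniq wt2_ltn_trans) (sorted_colex_pairs n) => q; apply: ltnn.
Qed.

Lemma count_colex_pairs_in (a : pred nat) n :
  count (fun q => a q.1 && a q.2) (colex_pairs n) = 'C(count a (iota 0 n), 2).
Proof.
elim: n => // n IHn.
have -> : iota 0 n.+1 = iota 0 n ++ [:: n] by rewrite -addn1 iotaD.
rewrite colex_pairsS !count_cat IHn count_map /= addn0.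
have -> : count (preim (pair^~ n) (fun q => a q.1 && a q.2)) (iota 0 n) =
          a n * count a (iota 0 n).
  case an: (a n); last first.
    by rewrite (@eq_count _ _ pred0) ?count_pred0 // => i /=; rewrite an andbF.
  by rewrite mul1n; apply: eq_count => i /=; rewrite an andbT.
by case: (a n); rewrite ?mul1n ?mul0n ?addn0 // addn1 binS bin1.
Qed.

Lemma bin2_cascade N : exists r t, N = 'C(r, 2) + t /\ t < r.
Proof.
elim: N => [|N [r [t [-> lt_tr]]]]; first by exists 1, 0.
case: (ltnP t.+1 r) => [lt_t1r|le_rt1]; first by exists r, t.+1; split=> //; lia.
by exists r.+1, 0; split=> //; rewrite binS bin1; lia.
Qed.

Lemma bin2_convex lo hi x y : lo <= x -> x <= hi -> x + y = lo + hi ->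
  'C(x, 2) + 'C(y, 2) <= 'C(lo, 2) + 'C(hi, 2).
Proof.
move=> lo_x x_hi sum_xy.
have bin2E k : 'C(k, 2).*2 + k = k * k.
  by elim: k => // k IHk; move: IHk; rewrite binS bin1 doubleD; nia.
have lohi_xy : lo * hi <= x * y.
  have -> : y = hi - (x - lo) by lia.
  nia.
suff : 'C(x, 2).*2 + 'C(y, 2).*2 <= 'C(lo, 2).*2 + 'C(hi, 2).*2.
  by rewrite -!doubleD leq_double.
have := bin2E x; have := bin2E y; have := bin2E lo; have := bin2E hi; nia.
Qed.

Lemma cascade_mono r t r' t' : t < r -> t' <= r' ->
  'C(r', 2) + t' <= 'C(r, 2) + t -> 'C(r', 3) + 'C(t', 2) <= 'C(r, 3) + 'C(t, 2).
Proof.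
move=> lt_tr le_tr' le_sum; case: (ltngtP r' r) => [lt_r|lt_r|eq_r].
- have := leq_bin2l 2 le_tr'; have := leq_bin2l 3 lt_r; rewrite binS; lia.
- by have := leq_bin2l 2 lt_r; rewrite binS bin1; lia.
- by move: le_sum; rewrite eq_r !leq_add2l; apply: leq_bin2l.
Qed.

(* The inductive step of [triangles_le]: the last vertex has degree d and lies
   on X <= min(C(d,2), C(r',2) + t') triangles. *)
Lemma cascade_step r t r' t' d X : t < r -> t' < r' ->
  'C(r', 2) + t' + d = 'C(r, 2) + t -> X <= 'C(d, 2) -> X <= 'C(r', 2) + t' ->
  'C(r', 3) + 'C(t', 2) + X <= 'C(r, 3) + 'C(t, 2).
Proof.
move=> lt_tr lt_tr' sum_e X_d X_e.
have [d_e|e_d] := leqP 'C(d, 2) ('C(r', 2) + t').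
  have le_dr' : d <= r'.
    by rewrite leqNgt; apply/negP => /(leq_bin2l 2); rewrite binS bin1; lia.
  have [lt_td|le_td] := ltnP (t' + d) r'.
    have : 'C(t', 2) + 'C(d, 2) <= 'C(0, 2) + 'C(t' + d, 2) by apply: bin2_convex; lia.
    have : 'C(r', 3) + 'C(t' + d, 2) <= 'C(r, 3) + 'C(t, 2) by apply: cascade_mono; lia.
    rewrite bin0n; lia.
  have : 'C(t', 2) + 'C(d, 2) <= 'C(t' + d - r', 2) + 'C(r', 2) by apply: bin2_convex; lia.
  have : 'C(r'.+1, 3) + 'C(t' + d - r', 2) <= 'C(r, 3) + 'C(t, 2).
    by apply: cascade_mono; rewrite ?binS ?bin1; lia.
  rewrite binS; lia.
have lt_r'd : r' < d by rewrite ltnNge; apply/negP => /(leq_bin2l 2); lia.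
have : 'C(r'.+1, 3) + 'C(t'.+1, 2) <= 'C(r, 3) + 'C(t, 2).
  by apply: cascade_mono; rewrite ?binS ?bin1; lia.
rewrite !binS !bin1; lia.
Qed.

Lemma triangles_le (e : rel nat) n r t :
  count (fun q => e q.1 q.2) (colex_pairs n) = 'C(r, 2) + t -> t < r ->
  count (fun x => [&& e x.1.1 x.1.2, e x.1.1 x.2 & e x.1.2 x.2]) (colex_triples n)
    <= 'C(r, 3) + 'C(t, 2).
Proof.
elim: n r t => [|n IHn] r t; first by rewrite /colex_triples.
rewrite colex_pairsS colex_triplesS !count_cat count_map => sum_e lt_tr.
have [r' [t' [e_n lt_tr']]] := bin2_cascade (count (fun q => e q.1 q.2) (colex_pairs n)).
set X := count _ [seq (q.1, q.2, n) | q <- colex_pairs n].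
set d := count (e^~ n) (iota 0 n).
have {}sum_e : 'C(r', 2) + t' + d = 'C(r, 2) + t by rewrite -e_n.
have X_d : X <= 'C(d, 2).
  rewrite /X count_map -count_colex_pairs_in; apply: sub_count => q /=.
  by case/and3P=> _ -> ->.
have X_e : X <= 'C(r', 2) + t'.
  by rewrite /X count_map -e_n; apply: sub_count => q /= /and3P[].
have := IHn r' t' e_n lt_tr'; have := cascade_step lt_tr lt_tr' sum_e X_d X_e.
lia.
Qed.

Local Open Scope ring_scope.

Lemma linfun_linearE (R : fieldType) (aT rT : vectType R) (f : aT -> rT) :
  (forall a x y, f (a *: x + y) = a *: f x + f y) -> linfun f =1 f.
Proof.
move=> f_lin; pose ff : {linear aT -> rT} := HB.pack f (GRing.isLinear.Build _ _ _ _ f f_lin).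
exact: lfunE ff.
Qed.

Lemma linear_mem_span (R : fieldType) (aT rT : vectType R) (f : aT -> rT)
    (X : seq aT) (S : {vspace rT}) :
  (forall a x y, f (a *: x + y) = a *: f x + f y) ->
  {in X, forall x, f x \in S} -> {in <<X>>%VS, forall x, f x \in S}.
Proof.
move=> f_lin fXS x /(memv_img (linfun f)); rewrite limg_span linfun_linearE //.
apply: subvP; apply/span_subvP => _ /mapP[y /fXS fyS ->].
by rewrite linfun_linearE.
Qed.

Section GreedyBasis.
Variables (F : fieldType) (V : vectType F) (T : eqType) (f : T -> V).

Definition greedy_step (B : seq T) (p : T) : seq T :=
  if f p \notin <<map f B>>%VS then rcons B p else B.

Definition greedy (L : seq T) : seq T := foldl greedy_step [::] L.

Lemma span_greedy_step B p :
  <<map f (greedy_step B p)>>%VS = (<<map f B>> + <[f p]>)%VS.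
Proof.
rewrite /greedy_step; case: ifPn => [_|/negbNE fp_in].
  by rewrite map_rcons -cats1 span_cat span_seq1.
by apply/esym/addv_idPl; rewrite -memvE.
Qed.

Lemma span_foldl_greedy L B :
  <<map f (foldl greedy_step B L)>>%VS = (<<map f B>> + <<map f L>>)%VS.
Proof.
elim: L B => [|p L IHL] B /=; first by rewrite span_nil addv0.
by rewrite IHL span_greedy_step span_cons addvA.
Qed.

Lemma free_foldl_greedy L B : free (map f B) -> free (map f (foldl greedy_step B L)).
Proof.
elim: L B => [|p L IHL] B //= freeB; apply: IHL.
rewrite /greedy_step; case: ifP => // fp_notin.
have /perm_free -> : perm_eq (map f (rcons B p)) (f p :: map f B).
  by rewrite map_rcons perm_rcons.
by rewrite free_cons fp_notin.
Qed.

Lemma mem_foldl_greedy L B p : p \in foldl greedy_step B L ->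
  p \in B \/ exists pre suf, L = pre ++ p :: suf /\
    f p \notin (<<map f B>> + <<map f pre>>)%VS.
Proof.
elim: L B => [|q L IHL] B /=; first by left.
move/IHL => [|[pre [suf [-> fp_notin]]]]; last first.
  right; exists (q :: pre), suf; split=> //.
  by move: fp_notin; rewrite span_greedy_step span_cons addvA.
rewrite /greedy_step; case: ifP => [fq_notin|_]; last by left.
rewrite mem_rcons in_cons => /orP[/eqP ->|]; last by left.
by right; exists [::], L; rewrite span_nil addv0.
Qed.

Lemma span_greedy L : <<map f (greedy L)>>%VS = <<map f L>>%VS.
Proof. by rewrite span_foldl_greedy span_nil add0v. Qed.

Lemma free_greedy L : free (map f (greedy L)).
Proof. exact/free_foldl_greedy/nil_free. Qed.

Lemma greedy_notin_prefix L p : p \in greedy L ->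
  exists pre suf, L = pre ++ p :: suf /\ f p \notin <<map f pre>>%VS.
Proof.
by case/mem_foldl_greedy=> [//|[pre [suf]]]; rewrite span_nil add0v; exists pre, suf.
Qed.

End GreedyBasis.

Section AlternatingMap.
Variables (F : fieldType) (U V : vectType F) (A : U -> U -> V).
Variables (n : nat) (u : n.-tuple U).
Hypothesis A_linl : forall a x y z, A (a *: x + y) z = a *: A x z + A y z.
Hypothesis A_linr : forall a x y z, A x (a *: y + z) = a *: A x y + A x z.
Hypothesis A_alt : forall x, A x x = 0.
Hypothesis A_span : forall S : {vspace V}, (forall x y, A x y \in S) -> S = fullv.
Hypothesis u_basis : basis_of fullv u.

Lemma A_skew x y : A y x = - A x y.
Proof.
have ADl x1 x2 z : A (x1 + x2) z = A x1 z + A x2 z.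
  by have := A_linl 1 x1 x2 z; rewrite !scale1r.
have ADr z y1 y2 : A z (y1 + y2) = A z y1 + A z y2.
  by have := A_linr 1 z y1 y2; rewrite !scale1r.
apply/eqP; rewrite -addr_eq0 addrC.
by have := A_alt (x + y); rewrite ADl !ADr !A_alt add0r addr0 => ->.
Qed.

(* Indices are naturals from here on: [u`_i] is junk ([0]) for [i >= n], so
   every lemma below carries the bounds it needs. *)
Definition Apair (q : nat * nat) : V := A u`_q.1 u`_q.2.

Definition nat_pair (p : 'I_n * 'I_n) : nat * nat := (val p.1, val p.2).

Lemma nat_pair_inj : injective nat_pair.
Proof. by move=> [i j] [k l] [/val_inj -> /val_inj ->]. Qed.

Lemma A_tnth p : A (tnth u p.1) (tnth u p.2) = Apair (nat_pair p).
Proof. by rewrite /Apair !(tnth_nth 0). Qed.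

Lemma map_nat_pair_pairsY : map nat_pair (pairsY n) = colex_pairs n.
Proof.
rewrite /pairsY /colex_pairs map_flatten -map_comp -val_enum_ord -map_comp.
congr flatten; apply: eq_map => j /=.
rewrite -map_comp -(filter_iota_ltn 0 (ltnW (ltn_ord j))) -val_enum_ord filter_map.
by rewrite -map_comp.
Qed.

Lemma span_Apair : <<map Apair (colex_pairs n)>>%VS = fullv.
Proof.
set S := <<_>>%VS; apply: A_span.
have A_basis i j : (i < n)%N -> (j < n)%N -> Apair (i, j) \in S.
  move=> lt_in lt_jn; rewrite /Apair.
  have [lt_ij|lt_ji|->] := ltngtP i j; last by rewrite A_alt mem0v.
    by apply/memv_span; apply: (map_f Apair (x := (i, j))); rewrite mem_colex_pairs lt_ij.
  rewrite A_skew memvN; apply/memv_span.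
  by apply: (map_f Apair (x := (j, i))); rewrite mem_colex_pairs lt_ji.
have A_u x z : x \in u -> z \in u -> A x z \in S.
  move=> /(nthP 0)[i lt_in <-] /(nthP 0)[j lt_jn <-].
  by apply: A_basis; rewrite -(size_tuple u).
have u_all z : z \in <<u>>%VS by case/andP: u_basis => /eqP ->; rewrite memvf.
move=> x y; apply: (linear_mem_span (f := A^~ y) _ _ (u_all x)) => // x' x'_u.
by apply: (linear_mem_span (f := A x') _ _ (u_all y)) => // z z_u; apply: A_u.
Qed.

Definition Bpairs : seq (nat * nat) := map nat_pair (greedyB A u).

Lemma map_A_tnth L :
  map (fun p => A (tnth u p.1) (tnth u p.2)) L = map Apair (map nat_pair L).
Proof. by rewrite -map_comp; apply: eq_map => p; rewrite /= A_tnth. Qed.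

Lemma free_Bpairs : free (map Apair Bpairs).
Proof. by rewrite -map_A_tnth; apply: free_greedy. Qed.

Lemma size_Bpairs : size Bpairs = \dim (fullv : {vspace V}).
Proof.
have span_B : <<map Apair Bpairs>>%VS = fullv.
  by rewrite -map_A_tnth span_greedy map_A_tnth map_nat_pair_pairsY span_Apair.
by rewrite -span_B (eqP free_Bpairs) size_map.
Qed.

Lemma Bpairs_sub : {subset Bpairs <= colex_pairs n}.
Proof.
move=> _ /mapP[p /greedy_notin_prefix [pre [suf [pairsY_eq _]]] ->].
by rewrite -map_nat_pair_pairsY map_f // pairsY_eq mem_cat mem_head orbT.
Qed.

Lemma uniq_Bpairs : uniq Bpairs.
Proof. exact: map_uniq (free_uniq free_Bpairs). Qed.

Definition Aspan_before (p : nat * nat) : {vspace V} :=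
  <<[seq Apair q | q <- colex_pairs n & (wt2 q < wt2 p)%N]>>%VS.

Lemma Apair_notin_before p : p \in Bpairs -> Apair p \notin Aspan_before p.
Proof.
case/mapP=> o /greedy_notin_prefix [pre [suf [pairsY_eq]]] + ->.
rewrite map_A_tnth A_tnth; apply: contra => in_before.
suff : (Aspan_before (nat_pair o) <= <<map Apair (map nat_pair pre)>>)%VS by move/subvP; apply.
apply/span_subvP => v /mapP[q]; rewrite mem_filter => /andP[lt_qo q_in] ->.
have := sorted_colex_pairs n.
rewrite -map_nat_pair_pairsY pairsY_eq map_cat sorted_cat_cons => /andP[_].
move/(order_path_min wt2_ltn_trans)/allP => after_o.
move: q_in; rewrite -map_nat_pair_pairsY pairsY_eq map_cat mem_cat in_cons.
case/or3P=> [q_pre|/eqP q_o|q_suf].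
- by apply: memv_span; apply: map_f.
- by rewrite q_o ltnn in lt_qo.
- by have := after_o q q_suf; rewrite ltnNge ltnW.
Qed.

Lemma tensE (v : V) (z : U) (g : 'Hom(U, F^o)) : tens v z g = g z *: v.
Proof.
rewrite /tens linfun_linearE // => a g1 g2.
by rewrite add_lfunE scale_lfunE scalerDl scalerA.
Qed.

Definition coord_fun (l : 'I_n) : 'Hom(U, F^o) := @linfun _ U F^o (coord u l).

Lemma coord_funE l b : (b < n)%N -> coord_fun l u`_b = (b == l)%:R.
Proof.
move=> lt_bn; rewrite /coord_fun lfunE /= -[b]/(val (Ordinal lt_bn)).
by rewrite coord_free ?(basis_free u_basis).
Qed.

Definition eval_coord (l : 'I_n) : 'Hom(tensVU U V, V) :=
  linfun (fun w : tensVU U V => w (coord_fun l)).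

Lemma eval_coordE l w : eval_coord l w = w (coord_fun l).
Proof. by rewrite linfun_linearE // => a w1 w2; rewrite add_lfunE scale_lfunE. Qed.

Definition Psi_triple (x : nat * nat * nat) : tensVU U V := Psi3 A u`_x.1.1 u`_x.1.2 u`_x.2.

Lemma eval_coord_Psi l a b c : (a < n)%N -> (b < n)%N -> (c < n)%N ->
  eval_coord l (Psi_triple (a, b, c)) =
    (c == l)%:R *: Apair (a, b) + (a == l)%:R *: Apair (b, c) - (b == l)%:R *: Apair (a, c).
Proof.
move=> lt_an lt_bn lt_cn.
by rewrite eval_coordE !add_lfunE !tensE !coord_funE // [A _ u`_a]A_skew scalerN.
Qed.

Lemma eval_coord_Psi_before (y : nat * nat * nat) (p : nat * nat) (l : 'I_n) :
  y \in colex_triples n -> (wt3 y < wt2 p + 2 ^ l)%N ->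
  eval_coord l (Psi_triple y) \in Aspan_before p.
Proof.
case: y => [[a b] c]; rewrite mem_colex_triples => /and3P[lt_ab lt_bc lt_cn].
rewrite /wt3 /= => lt_y; have lt_bn := ltn_trans lt_bc lt_cn.
have before i j : (i < j)%N -> (j < n)%N -> (wt2 (i, j) < wt2 p)%N ->
    Apair (i, j) \in Aspan_before p.
  move=> lt_ij lt_jn lt_wt; apply/memv_span.
  by rewrite (map_f Apair) // mem_filter lt_wt mem_colex_pairs lt_ij.
rewrite eval_coord_Psi ?(ltn_trans lt_ab lt_bn) // memvB ?memvD //.
all: case: eqP => [l_eq|_]; rewrite ?scale0r ?mem0v // scale1r.
all: rewrite -l_eq in lt_y.
all: apply: before; rewrite ?[wt2 (_, _)]/wt2 /=; lia.
Qed.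

Definition has_Bpair (x : nat * nat * nat) : bool :=
  [|| (x.1.1, x.1.2) \in Bpairs, (x.1.1, x.2) \in Bpairs | (x.1.2, x.2) \in Bpairs].

Lemma eval_coord_Psi_pair (x : nat * nat * nat) : x \in colex_triples n -> has_Bpair x ->
  exists p (l : 'I_n),
    (wt3 x = wt2 p + 2 ^ l)%N /\ eval_coord l (Psi_triple x) \notin Aspan_before p.
Proof.
case: x => [[a b] c]; rewrite mem_colex_triples => /and3P[lt_ab lt_bc lt_cn].
have lt_ac := ltn_trans lt_ab lt_bc; have lt_bn := ltn_trans lt_bc lt_cn.
have lt_an := ltn_trans lt_ab lt_bn.
case/or3P=> [B_ab|B_ac|B_bc].
- exists (a, b), (Ordinal lt_cn); split; first by [].
  rewrite eval_coord_Psi // eqxx (ltn_eqF lt_ac) (ltn_eqF lt_bc).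
  rewrite [true%:R *: _]scale1r !scale0r addr0 subr0.
  exact: Apair_notin_before.
- exists (a, c), (Ordinal lt_bn); split; first by rewrite /wt3 /wt2 /= addnAC.
  rewrite eval_coord_Psi // eqxx (gtn_eqF lt_bc) (ltn_eqF lt_ab).
  rewrite [true%:R *: _]scale1r !scale0r add0r sub0r memvN.
  exact: Apair_notin_before.
- exists (b, c), (Ordinal lt_an); split; first by rewrite /wt3 /wt2 /= [RHS]addnC addnA.
  rewrite eval_coord_Psi // eqxx (gtn_eqF lt_ac) (gtn_eqF lt_ab).
  rewrite [true%:R *: _]scale1r !scale0r add0r subr0.
  exact: Apair_notin_before.
Qed.

Lemma Psi_triple_notin_span x (Y : seq (nat * nat * nat)) :
  x \in colex_triples n -> has_Bpair x ->
  {in Y, forall y, (y \in colex_triples n) && (wt3 y < wt3 x)%N} ->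
  Psi_triple x \notin <<map Psi_triple Y>>%VS.
Proof.
move=> x_in x_B Y_before; have [p [l [wt_x notin_p]]] := eval_coord_Psi_pair x_in x_B.
apply: contra notin_p => /(memv_img (eval_coord l)); rewrite limg_span.
apply: subvP; apply/span_subvP => _ /mapP[_ /mapP[y y_in ->] ->].
by case/andP: (Y_before y y_in) => y_tr lt_y; apply: eval_coord_Psi_before; rewrite -?wt_x.
Qed.

Lemma free_Psi_triple (Y : seq (nat * nat * nat)) :
  sorted (fun x y => (wt3 x < wt3 y)%N) Y ->
  all (fun x => (x \in colex_triples n) && has_Bpair x) Y -> free (map Psi_triple Y).
Proof.
elim/last_ind: Y => [|Y x IHY]; first by rewrite nil_free.
rewrite sorted_pairwise; last exact: wt3_ltn_trans.
rewrite -cats1 pairwise_cat all_cat /= andbT allrel1r.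
case/andP=> before_x sortedY /and3P[good_Y /andP[x_tr x_B] _].
have /perm_free -> : perm_eq (map Psi_triple (Y ++ [:: x])) (Psi_triple x :: map Psi_triple Y).
  by rewrite map_cat perm_catC.
rewrite free_cons IHY ?sorted_pairwise ?andbT //; last exact: wt3_ltn_trans.
apply: Psi_triple_notin_span => // y y_in.
by rewrite (allP before_x) // andbT; case/andP: (allP good_Y y y_in).
Qed.

Lemma count_has_Bpair (m r t : nat) : \dim (fullv : {vspace V}) = m ->
  'C(n, 2) = (m + 'C(r, 2) + t)%N -> (t < r)%N ->
  ('C(n, 3) - 'C(r, 3) - 'C(t, 2) <= count has_Bpair (colex_triples n))%N.
Proof.
move=> dimV sum_n lt_tr.
have count_B : count (mem Bpairs) (colex_pairs n) = m.
  rewrite -dimV -size_Bpairs -size_filter; apply/perm_size/uniq_perm.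
  - by rewrite filter_uniq ?uniq_colex_pairs.
  - exact: uniq_Bpairs.
  - by move=> q; rewrite mem_filter andb_idr //; apply: Bpairs_sub.
have count_nB : count (fun q => (q.1, q.2) \notin Bpairs) (colex_pairs n) = ('C(r, 2) + t)%N.
  have := count_predC (mem Bpairs) (colex_pairs n).
  rewrite size_colex_pairs count_B.
  rewrite (@eq_count _ _ (fun q => (q.1, q.2) \notin Bpairs)) => [|[]//].
  lia.
have := @triangles_le (fun a b => (a, b) \notin Bpairs) n r t count_nB lt_tr.
have := count_predC has_Bpair (colex_triples n); rewrite size_colex_triples.
rewrite (@eq_count _ (predC has_Bpair) (fun x => [&& (x.1.1, x.1.2) \notin Bpairs,
           (x.1.1, x.2) \notin Bpairs & (x.1.2, x.2) \notin Bpairs])) => [|x]; last first.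
  by rewrite /= /has_Bpair !negb_or.
lia.
Qed.

Lemma inWB_Psi_triple x : x \in colex_triples n -> has_Bpair x -> inWB A u (Psi_triple x).
Proof.
case: x => [[a b] c]; rewrite mem_colex_triples => /and3P[lt_ab lt_bc lt_cn] x_B.
have lt_bn := ltn_trans lt_bc lt_cn; have lt_an := ltn_trans lt_ab lt_bn.
exists (Ordinal lt_an), (Ordinal lt_bn), (Ordinal lt_cn).
split=> //; last by rewrite /Psi_triple !(tnth_nth 0).
by rewrite -orbA -!(mem_map nat_pair_inj).
Qed.

End AlternatingMap.

Theorem proposition2p8 (F : fieldType) (U V : vectType F)
  (A : U -> U -> V) (n m : nat) (u : n.-tuple U) (r t : nat) :
  (forall (a : F) (x y z : U), A (a *: x + y) z = a *: A x z + A y z) ->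
  (forall (a : F) (x y z : U), A x (a *: y + z) = a *: A x y + A x z) ->
  (forall x : U, A x x = 0) ->
  (forall S : {vspace V}, (forall x y : U, A x y \in S) -> S = fullv) ->
  basis_of fullv u ->
  \dim (fullv : {vspace V}) = m ->
  'C(n, 2) = (m + 'C(r, 2) + t)%N ->
  (t < r)%N ->
  (exists s : seq (tensVU U V),
      [/\ {in s, forall w, inWB A u w}, free s
        & size s = ('C(n, 3) - 'C(r, 3) - 'C(t, 2))%N])
  /\
  (forall S : {vspace tensVU U V},
      (forall x y z : U, Psi3 A x y z \in S) ->
      ('C(n, 3) - 'C(r, 3) - 'C(t, 2) <= \dim S)%N).
Proof.
move=> A_linl A_linr A_alt A_span u_basis dimV sum_n lt_tr.
set K := ('C(n, 3) - 'C(r, 3) - 'C(t, 2))%N.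
set T := [seq x <- colex_triples n | has_Bpair A u x].
have T_good : all (fun x => (x \in colex_triples n) && has_Bpair A u x) T.
  by apply/allP => x; rewrite mem_filter andbC.
have le_K : (K <= size T)%N.
  by rewrite size_filter (count_has_Bpair A_linl A_linr A_alt A_span u_basis dimV).
have free_T : free (map (Psi_triple A u) T).
  apply: free_Psi_triple T_good => //.
  by apply: (subseq_sorted wt3_ltn_trans) (sorted_colex_triples n); apply: filter_subseq.
have free_K : free (map (Psi_triple A u) (take K T)).
  by apply: (@catl_free _ _ (map (Psi_triple A u) (drop K T))); rewrite -map_cat cat_take_drop.
have size_K : size (map (Psi_triple A u) (take K T)) = K by rewrite size_map size_takel.
split.
  exists (map (Psi_triple A u) (take K T)); split=> //.
  move=> w /mapP[x /mem_take]; rewrite mem_filter => /andP[x_B x_in] ->.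
  exact: inWB_Psi_triple.
move=> S Psi_S; rewrite -size_K -(eqP free_K); apply: dimvS.
by apply/span_subvP => _ /mapP[x _ ->]; apply: Psi_S.
Qed.
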